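(* Let $F_t$, $t\in[0,1]$, be a one-parameter family on a complete metric space $(\mathbb X,d)$ satisfying (H1), (H2) and (H3). Then the lower transition attractor $A_\bullet$ exists, and: (i) $A_\bullet=\bigcap\{A\subseteq\mathbb X: F_1(A)=A \text{ and } Q\subseteq A\}$; (ii) $A_\bullet=\overline{\bigcup_{n\ge 0}F_1^{(n)}(Q)}$; (iii) $A_\bullet=\overline{\bigcup_{n\ge0}F_1^{(n)}(Q')}$, where $Q'=\{q_i:i\in J\}$ for any nonempty $J\subseteq\{1,\dots,N\}$ with $\{i:\mathrm{Lip}(f_{(i,1)},d)=1\}\subseteq J$; (iv) for any such $Q'$, $A_\bullet$ is the semiattractor of the IFS $F_1^\flat:=F_1\cup\{\check q: q\in Q'\}$, where $\check q:\mathbb X\to\mathbb X$ is the constant map $\check q(x)=q$.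
   Context: Let $(\mathbb X,d)$ be a complete metric space. A one-parameter family is $F_t=\{f_{(1,t)},\dots,f_{(N,t)}\}$, $t\in[0,1]$, $N\ge2$, of continuous self-maps of $\mathbb X$. $\mathrm{Lip}(f,d)=\sup_{x\ne y}d(f(x),f(y))/d(x,y)$ and $\mathrm{Lip}(F_t,d)=\max_i\mathrm{Lip}(f_{(i,t)},d)$. Conditions: (H1) for every $x\in\mathbb X$ and every $i$, the map $t\mapsto f_{(i,t)}(x)$ is continuous on $[0,1]$; (H2) $\mathrm{Lip}(F_t,d)<1$ for all $t\in[0,1)$; (H3) for each $i$ the limit $q_i=\lim_{t\to1^-}q_{i,t}$ exists, where $q_{i,t}$ is the unique fixed point of $f_{(i,t)}$ for $t\in[0,1)$; $Q=\{q_1,\dots,q_N\}$. For an IFS $F$ (a family of continuous self-maps) and $S\subseteq\mathbb X$, the Hutchinson operator is $F(S)=\overline{\bigcup_{f\in F}f(S)}$, $F^{(n)}$ its $n$-fold iterate, $F^{(0)}=\mathrm{id}$. The lower transition attractor of $F_t$ is the smallest (w.r.t. inclusion) set $A_\bullet\subseteq\mathbb X$ with $F_1(A_\bullet)=A_\bullet$ and $Q\subseteq A_\bullet$. For sets $S_n\subseteq\mathbb X$, $Li(S_n)=\{y\in\mathbb X:\exists x_n\in S_n,\ x_n\to y\}$ (lower Kuratowski limit). The semiattractor of an IFS $F$ on $\mathbb X$ is $A_*=\bigcap_{x\in\mathbb X}Li(F^{(n)}(\{x\}))$, provided this intersection is nonempty. *)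

From Stdlib Require Import Reals.
From Coquelicot Require Import Coquelicot.
Open Scope R_scope.

Section Metric.
Variable X : Type.
Variable d : X -> X -> R.

Definition is_metric : Prop :=
  (forall x y, 0 <= d x y) /\
  (forall x y, d x y = 0 <-> x = y) /\
  (forall x y, d x y = d y x) /\
  (forall x y z, d x z <= d x y + d y z).

Definition seq_cvg (u : nat -> X) (l : X) : Prop :=
  forall eps, 0 < eps -> exists M, forall n, (M <= n)%nat -> d (u n) l < eps.

Definition cauchy (u : nat -> X) : Prop :=
  forall eps, 0 < eps -> exists M, forall m n, (M <= m)%nat -> (M <= n)%nat ->
    d (u m) (u n) < eps.

Definition complete : Prop :=
  forall u : nat -> X, cauchy u -> exists l, seq_cvg u l.

Definition continuous_map (f : X -> X) : Prop :=
  forall x eps, 0 < eps -> exists delta, 0 < delta /\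
    forall y, d x y < delta -> d (f x) (f y) < eps.

Definition Lip (f : X -> X) : Rbar :=
  Lub_Rbar (fun r => exists x y, x <> y /\ r = d (f x) (f y) / d x y).

Definition set_eq (A B : X -> Prop) : Prop := forall x, A x <-> B x.
Definition subset (A B : X -> Prop) : Prop := forall x, A x -> B x.

Definition closure (S : X -> Prop) : X -> Prop :=
  fun x => forall eps, 0 < eps -> exists y, S y /\ d x y < eps.

Definition IFS := (X -> X) -> Prop.

Definition hutchinson (F : IFS) (S : X -> Prop) : X -> Prop :=
  closure (fun y => exists g, F g /\ exists z, S z /\ y = g z).

Fixpoint hutch_iter (F : IFS) (n : nat) (S : X -> Prop) : X -> Prop :=
  match n with
  | O => S
  | S n' => hutchinson F (hutch_iter F n' S)
  end.

Definition orbit_closure (F : IFS) (S : X -> Prop) : X -> Prop :=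
  closure (fun x => exists n, hutch_iter F n S x).

Definition Li (Sn : nat -> X -> Prop) : X -> Prop :=
  fun y => exists u : nat -> X, (forall n, Sn n (u n)) /\ seq_cvg u y.

Definition is_semiattractor (F : IFS) (A : X -> Prop) : Prop :=
  (exists y, A y) /\
  set_eq A (fun y => forall x, Li (fun n => hutch_iter F n (fun z => z = x)) y).

End Metric.

Arguments hutchinson {X} d F S _.
Arguments hutch_iter {X} d F n S _.
Arguments orbit_closure {X} d F S _.
Arguments is_semiattractor {X} d F A.
Arguments Lip {X} d f.
Arguments set_eq {X} A B.
Arguments subset {X} A B.

(** The one-parameter family: f i t is f_{(i+1,t)}, for i < N (0-based indices). *)

Definition F1 {X : Type} (N : nat) (f : nat -> R -> X -> X) : (X -> X) -> Prop :=
  fun g => exists i, (i < N)%nat /\ g = f i 1.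

Definition Qset {X : Type} (N : nat) (q : nat -> X) : X -> Prop :=
  fun x => exists i, (i < N)%nat /\ x = q i.
Definition Qsub {X : Type} (J : nat -> Prop) (q : nat -> X) : X -> Prop :=
  fun x => exists i, J i /\ x = q i.

Definition F1flat {X : Type} (N : nat) (f : nat -> R -> X -> X)
  (J : nat -> Prop) (q : nat -> X) : (X -> X) -> Prop :=
  fun g => F1 N f g \/ exists i, J i /\ g = (fun _ : X => q i).

Definition is_lower_transition_attractor {X : Type} (d : X -> X -> R) (N : nat)
  (f : nat -> R -> X -> X) (q : nat -> X) (A : X -> Prop) : Prop :=
  set_eq (hutchinson d (F1 N f) A) A /\ subset (Qset N q) A /\
  forall B : X -> Prop, set_eq (hutchinson d (F1 N f) B) B ->
    subset (Qset N q) B -> subset A B.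

(* The maps f_(i,1) are pointwise limits of contractions, hence nonexpansive, and
   q_i is a fixed point of f_(i,1) because it is the limit of the fixed points of
   f_(i,t).  For a nonexpansive IFS whose seed set consists of fixed points, the
   closure of the orbit of the seed is invariant under the Hutchinson operator and
   lies in every invariant set containing the seed, which gives (i) and (ii).  For
   i outside J the map f_(i,1) is a genuine contraction, so its iterates of any q_j
   converge to q_i; thus Q lies in the orbit closure of Q', giving (iii).  For (iv),
   the constant maps put Q' inside F_1^flat({x}) for every x, so each point of A is
   a limit of points of the iterates F_1^flat^(n)({x}); conversely these iterates,
   started at a point of Q', never leave the closed invariant set A. *)

From Pilot Require Import Defs.
From Stdlib Require Import Reals Lra Lia ClassicalEpsilon.
From Coquelicot Require Import Coquelicot.
Open Scope R_scope.

Definition lipschitz_with {X : Type} (d : X -> X -> R) (c : R) (g : X -> X) : Prop :=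
  forall a b, d (g a) (g b) <= c * d a b.

Lemma iter_fixed_point {X : Type} (g : X -> X) p : g p = p -> forall n, Nat.iter n g p = p.
Proof. intros Hp n; induction n as [|n IH]; simpl; [reflexivity | rewrite IH; exact Hp]. Qed.

Lemma exists_near_one (da db : R) : 0 < da -> 0 < db ->
  exists s, 0 <= s < 1 /\ 1 - da < s /\ 1 - db < s.
Proof.
  intros Ha Hb. set (m := Rmin da (Rmin db 1)).
  assert (Hm0 : 0 < m) by (apply Rmin_glb_lt; [lra | apply Rmin_glb_lt; lra]).
  assert (Hma : m <= da) by apply Rmin_l.
  assert (Hmb : m <= Rmin db 1) by apply Rmin_r.
  pose proof (Rmin_l db 1). pose proof (Rmin_r db 1).
  exists (1 - m / 2). lra.
Qed.

Section MetricSpace.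
Context {X : Type} {d : X -> X -> R} (Hm : is_metric X d).

Lemma dist_ge0 x y : 0 <= d x y.
Proof. destruct Hm as [H _]; apply H. Qed.

Lemma dist_refl x : d x x = 0.
Proof. destruct Hm as [_ [H _]]; apply H; reflexivity. Qed.

Lemma dist_sym x y : d x y = d y x.
Proof. destruct Hm as [_ [_ [H _]]]; apply H. Qed.

Lemma dist_triangle x y z : d x z <= d x y + d y z.
Proof. destruct Hm as [_ [_ [_ H]]]; apply H. Qed.

Lemma dist_gt0 x y : x <> y -> 0 < d x y.
Proof.
  intros Hxy. destruct (dist_ge0 x y) as [H | H]; [exact H |].
  destruct Hm as [_ [Heq _]]. exfalso; apply Hxy, Heq; auto.
Qed.

Lemma eq_of_dist_lt x y : (forall eps, 0 < eps -> d x y < eps) -> x = y.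
Proof.
  intros H. destruct Hm as [_ [Heq _]]. apply Heq, Rle_antisym; [|apply dist_ge0].
  apply Rle_plus_epsilon; intros eps Heps. specialize (H eps Heps); lra.
Qed.

Lemma subset_closure P : subset P (closure X d P).
Proof. intros x Hx eps Heps. exists x; split; [exact Hx | rewrite dist_refl; exact Heps]. Qed.

Lemma closure_mono P T : subset P T -> subset (closure X d P) (closure X d T).
Proof. intros H x Hx eps Heps. destruct (Hx eps Heps) as [y [Hy Hxy]]; eauto. Qed.

Lemma closure_closure P : subset (closure X d (closure X d P)) (closure X d P).
Proof.
  intros x Hx eps Heps. destruct (Hx (eps / 2)) as [y [Hy Hxy]]; [lra|].
  destruct (Hy (eps / 2)) as [z [Hz Hyz]]; [lra|].
  exists z; split; [exact Hz|]. pose proof (dist_triangle x y z); lra.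
Qed.

Lemma closure_of_seq_cvg P u y : (forall n, P (u n)) -> seq_cvg X d u y -> closure X d P y.
Proof.
  intros Hu Hcvg eps Heps. destruct (Hcvg eps Heps) as [M HM].
  exists (u M); split; [apply Hu | rewrite dist_sym; apply HM; lia].
Qed.

Lemma lipschitz_with_le c c' g : c <= c' -> lipschitz_with d c g -> lipschitz_with d c' g.
Proof.
  intros Hcc Hg a b. specialize (Hg a b). pose proof (dist_ge0 a b).
  assert (c * d a b <= c' * d a b) by (apply Rmult_le_compat_r; lra). lra.
Qed.

Lemma lipschitz_with_iter c g : 0 <= c -> lipschitz_with d c g ->
  forall n, lipschitz_with d (c ^ n) (Nat.iter n g).
Proof.
  intros Hc Hg n; induction n as [|n IH]; intros a b; simpl; [lra|].
  eapply Rle_trans; [apply Hg|]. rewrite Rmult_assoc. apply Rmult_le_compat_l; auto.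
Qed.

Lemma Lip_ge_ratio g x y : x <> y -> Rbar_le (d (g x) (g y) / d x y) (Lip d g).
Proof.
  intros Hxy. destruct (Lub_Rbar_correct (fun r => exists x y, x <> y /\ r = d (g x) (g y) / d x y))
    as [Hub _].
  apply Hub; eauto.
Qed.

Lemma Lip_le_lipschitz c g : lipschitz_with d c g -> Rbar_le (Lip d g) c.
Proof.
  intros Hg. destruct (Lub_Rbar_correct (fun r => exists x y, x <> y /\ r = d (g x) (g y) / d x y))
    as [_ Hlub].
  apply Hlub. intros r [a [b [Hab ->]]]. simpl. pose proof (dist_gt0 a b Hab).
  apply Rmult_le_reg_r with (d a b); [assumption|].
  unfold Rdiv; rewrite Rmult_assoc, Rinv_l by lra. rewrite Rmult_1_r. apply Hg.
Qed.

Lemma Lip_lt_1_contraction g : Rbar_lt (Lip d g) 1 ->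
  exists c, 0 <= c < 1 /\ lipschitz_with d c g.
Proof.
  intros Hlt.
  destruct (Lip d g) as [L | |] eqn:HL; simpl in Hlt; try contradiction.
  - exists (Rmax L 0). split; [split; [apply Rmax_r | apply Rmax_lub_lt; lra]|].
    intros a b. destruct (classic (a = b)) as [-> | Hab]; [rewrite !dist_refl; lra|].
    pose proof (dist_gt0 a b Hab). pose proof (Lip_ge_ratio g a b Hab) as Hr.
    rewrite HL in Hr; simpl in Hr.
    replace (d (g a) (g b)) with (d (g a) (g b) / d a b * d a b) by (field; lra).
    apply Rmult_le_compat_r; [lra|]. eapply Rle_trans; [exact Hr | apply Rmax_l].
  - exists 0. split; [lra|].
    intros a b. destruct (classic (a = b)) as [-> | Hab]; [rewrite !dist_refl; lra|].
    pose proof (Lip_ge_ratio g a b Hab) as Hr. rewrite HL in Hr. contradiction.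
Qed.

Lemma Lip_lt_1_of_nonexpansive g : lipschitz_with d 1 g -> Lip d g <> Finite 1 ->
  Rbar_lt (Lip d g) 1.
Proof.
  intros Hg Hneq. pose proof (Lip_le_lipschitz 1 g Hg) as Hle.
  destruct (Lip d g) as [L | |]; simpl in *; auto.
  destruct Hle as [Hlt | ->]; [exact Hlt | contradiction].
Qed.

Section Contraction.
Context (g : X -> X) (c : R) (Hc : 0 <= c < 1) (Hg : lipschitz_with d c g).

Lemma pow_mul_eventually_lt K eps : 0 < eps ->
  exists M, forall n, (M <= n)%nat -> c ^ n * K < eps.
Proof.
  intros Heps.
  destruct (pow_lt_1_zero c) with (y := eps / (Rabs K + 1)) as [M HM].
  { rewrite Rabs_pos_eq; lra. }
  { apply Rdiv_lt_0_compat; [lra | pose proof (Rabs_pos K); lra]. }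
  exists M. intros n Hn. specialize (HM n Hn).
  pose proof (Rabs_pos K). pose proof (Rle_abs K).
  rewrite Rabs_pos_eq in HM by (apply pow_le; lra).
  assert (Hcn : 0 <= c ^ n) by (apply pow_le; lra).
  assert (c ^ n * (Rabs K + 1) < eps).
  { apply Rmult_lt_reg_r with (/ (Rabs K + 1)); [apply Rinv_0_lt_compat; lra|].
    rewrite Rmult_assoc, Rinv_r by lra. lra. }
  nra.
Qed.

Lemma contraction_iter_cvg p a : g p = p -> seq_cvg X d (fun n => Nat.iter n g a) p.
Proof.
  intros Hp eps Heps. destruct (pow_mul_eventually_lt (d a p) eps Heps) as [M HM].
  exists M. intros n Hn. rewrite <- (iter_fixed_point g p Hp n).
  eapply Rle_lt_trans; [apply (lipschitz_with_iter c g (proj1 Hc) Hg n) | apply HM; exact Hn].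
Qed.

Lemma contraction_orbit_tail x0 n k :
  d (Nat.iter n g x0) (Nat.iter (n + k) g x0) <= c ^ n * (d x0 (g x0) / (1 - c)).
Proof.
  revert n; induction k as [|k IH]; intros n.
  - rewrite Nat.add_0_r, dist_refl. apply Rmult_le_pos; [apply pow_le; lra|].
    apply Rdiv_le_0_compat; [apply dist_ge0 | lra].
  - replace (n + S k)%nat with (S n + k)%nat by lia.
    pose proof (dist_triangle (Nat.iter n g x0) (Nat.iter (S n) g x0) (Nat.iter (S n + k) g x0)).
    pose proof (lipschitz_with_iter c g (proj1 Hc) Hg n x0 (g x0)) as Hstep.
    rewrite <- Nat.iter_succ_r in Hstep. specialize (IH (S n)).
    assert (Hsum : c ^ n * d x0 (g x0) + c ^ S n * (d x0 (g x0) / (1 - c))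
                   = c ^ n * (d x0 (g x0) / (1 - c))) by (simpl; field; lra).
    lra.
Qed.

Lemma contraction_orbit_cauchy x0 : Defs.cauchy X d (fun n => Nat.iter n g x0).
Proof.
  intros eps Heps. destruct (pow_mul_eventually_lt (d x0 (g x0) / (1 - c)) eps Heps) as [M HM].
  assert (Hle : forall m n, (M <= m)%nat -> (m <= n)%nat ->
            d (Nat.iter m g x0) (Nat.iter n g x0) < eps).
  { intros m n Hm' Hmn. replace n with (m + (n - m))%nat by lia.
    eapply Rle_lt_trans; [apply contraction_orbit_tail | apply HM; exact Hm']. }
  exists M. intros m n Hm' Hn. destruct (Nat.le_ge_cases m n).
  - apply Hle; assumption.
  - rewrite dist_sym. apply Hle; assumption.
Qed.

Lemma contraction_has_fixed_point (Hcomp : complete X d) (x0 : X) : exists p, g p = p.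
Proof.
  destruct (Hcomp _ (contraction_orbit_cauchy x0)) as [l Hl].
  exists l. apply eq_of_dist_lt. intros eps Heps.
  destruct (Hl (eps / 2)) as [M HM]; [lra|].
  pose proof (HM M (le_n M)). pose proof (HM (S M) (le_S _ _ (le_n M))) as HSM.
  simpl in HSM.
  pose proof (dist_triangle (g l) (g (Nat.iter M g x0)) l).
  pose proof (lipschitz_with_le c 1 g (Rlt_le _ _ (proj2 Hc)) Hg l (Nat.iter M g x0)).
  rewrite (dist_sym l) in *. lra.
Qed.

End Contraction.

Lemma exists_near_min_dist (P : X -> Prop) y eps : (exists z, P z) -> 0 < eps ->
  exists z, P z /\ forall w, P w -> d z y < d w y + eps.
Proof.
  intros [z0 Hz0] Heps. set (E := fun r => exists w, P w /\ r = d w y).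
  destruct (Glb_Rbar_correct E) as [Hlb Hglb].
  destruct (Glb_Rbar E) as [m | |] eqn:Hm'.
  - destruct (classic (exists w, P w /\ d w y < m + eps)) as [[w [Hw Hwy]] | Hno].
    + exists w; split; [exact Hw|]. intros w' Hw'.
      assert (Hm'w : Rbar_le m (d w' y)) by (apply Hlb; exists w'; auto). simpl in Hm'w; lra.
    + exfalso. assert (Hb : Rbar_le (m + eps) m).
      { apply Hglb. intros r [w [Hw ->]]. simpl. apply Rnot_lt_le. eauto. }
      simpl in Hb; lra.
  - exfalso. apply (Hlb (d z0 y)). exists z0; auto.
  - exfalso. apply (Hglb 0). intros r [w [_ ->]]. apply dist_ge0.
Qed.

Lemma Li_of_eventually_near (Sn : nat -> X -> Prop) y :
  (forall n, exists z, Sn n z) ->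
  (forall eps, 0 < eps -> exists M, forall n, (M <= n)%nat -> exists w, Sn n w /\ d w y < eps) ->
  Li X d Sn y.
Proof.
  intros Hne Hnear.
  (* Pick in each [Sn n] a point whose distance to [y] is within [1/(n+1)] of the infimum. *)
  destruct (choice (fun n z => Sn n z /\ forall w, Sn n w -> d z y < d w y + / INR (S n)))
    as [u Hu].
  { intros n. apply exists_near_min_dist; [apply Hne|].
    apply Rinv_0_lt_compat, lt_0_INR; lia. }
  exists u; split; [intros n; apply Hu|].
  intros eps Heps.
  destruct (Hnear (eps / 2)) as [M HM]; [lra|].
  destruct (archimed_cor1 (eps / 2)) as [K [HK HK0]]; [lra|].
  exists (max M K). intros n Hn.
  destruct (HM n) as [w [Hw Hwy]]; [lia|].
  assert (/ INR (S n) <= / INR K).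
  { apply Rinv_le_contravar; [apply lt_0_INR; lia | apply le_INR; lia]. }
  pose proof (proj2 (Hu n) w Hw). lra.
Qed.


Lemma hutchinson_mono (F G : IFS X) P T : (forall g, F g -> G g) -> subset P T ->
  subset (hutchinson d F P) (hutchinson d G T).
Proof.
  intros HFG HPT. apply closure_mono. intros y [g [Hg [z [Hz ->]]]].
  exists g; split; [auto | exists z; auto].
Qed.

Lemma hutchinson_image (F : IFS X) P g z : F g -> P z -> hutchinson d F P (g z).
Proof. intros Hg Hz. apply subset_closure. exists g; split; [exact Hg | exists z; auto]. Qed.

Lemma fixed_points_subset_hutchinson (F : IFS X) P :
  (forall p, P p -> exists g, F g /\ g p = p) -> subset P (hutchinson d F P).
Proof. intros HP p Hp. destruct (HP p Hp) as [g [Hg Hgp]]. rewrite <- Hgp. apply hutchinson_image; auto. Qed.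

Lemma hutch_iter_incr (F : IFS X) P : subset P (hutchinson d F P) ->
  forall n m, (n <= m)%nat -> subset (hutch_iter d F n P) (hutch_iter d F m P).
Proof.
  intros HP n m Hnm. induction Hnm as [|m _ IH]; [intros x Hx; exact Hx|].
  intros x Hx. apply IH in Hx. revert x Hx. clear IH.
  induction m as [|m IHm]; simpl; [exact HP | apply hutchinson_mono; auto].
Qed.

Lemma hutch_iter_subset (F : IFS X) P B :
  subset (hutchinson d F B) B -> subset P B -> forall n, subset (hutch_iter d F n P) B.
Proof.
  intros HFB HPB n; induction n as [|n IH]; simpl; [exact HPB|].
  intros x Hx. apply HFB. revert x Hx. apply hutchinson_mono; auto.
Qed.

Lemma iter_mem_hutch_iter (F : IFS X) P g z : F g -> P z ->
  forall n, hutch_iter d F n P (Nat.iter n g z).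
Proof. intros Hg Hz n; induction n as [|n IH]; simpl; [exact Hz | apply hutchinson_image; auto]. Qed.

Lemma subset_orbit_closure (F : IFS X) P : subset P (orbit_closure d F P).
Proof. intros x Hx. apply subset_closure. exists O; exact Hx. Qed.

Lemma orbit_closure_least (F : IFS X) P B :
  set_eq (hutchinson d F B) B -> subset P B -> subset (orbit_closure d F P) B.
Proof.
  intros HB HPB x Hx. apply HB. apply closure_closure.
  revert x Hx. apply closure_mono. intros x [n Hx]. apply HB.
  revert x Hx. apply hutch_iter_subset; [intros x Hx; apply HB; exact Hx | exact HPB].
Qed.

Lemma hutchinson_orbit_closure (F : IFS X) P :
  (forall g, F g -> lipschitz_with d 1 g) -> subset P (hutchinson d F P) ->
  set_eq (hutchinson d F (orbit_closure d F P)) (orbit_closure d F P).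
Proof.
  intros HF HP x; split.
  - intros Hx eps Heps.
    destruct (Hx (eps / 2)) as [y [[g [Hg [z [Hz ->]]]] Hxy]]; [lra|].
    destruct (Hz (eps / 2)) as [w [[n Hw] Hzw]]; [lra|].
    exists (g w); split; [exists (S n); apply hutchinson_image; auto|].
    pose proof (dist_triangle x (g z) (g w)). pose proof (HF g Hg z w). lra.
  - intros Hx. apply closure_closure. revert x Hx. apply closure_mono.
    intros x [n Hx]. apply (hutch_iter_incr F P HP n (S n)) in Hx; [|lia].
    revert x Hx. apply hutchinson_mono; [auto|].
    intros y Hy. apply subset_closure. exists n; exact Hy.
Qed.

Lemma fixed_point_mem_orbit_closure (F : IFS X) P g c p z :
  F g -> 0 <= c < 1 -> lipschitz_with d c g -> g p = p -> P z -> orbit_closure d F P p.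
Proof.
  intros Hg Hc Hlip Hp Hz.
  apply (closure_of_seq_cvg _ (fun n => Nat.iter n g z)).
  - intros n. exists n. apply iter_mem_hutch_iter; assumption.
  - exact (contraction_iter_cvg g c Hc Hlip p z Hp).
Qed.

Lemma is_semiattractor_set_eq (G : IFS X) A B :
  set_eq A B -> is_semiattractor d G A -> is_semiattractor d G B.
Proof.
  intros HAB [[y Hy] HA]. split; [exists y; apply HAB, Hy|].
  intros x. rewrite <- (HAB x). apply HA.
Qed.

Lemma orbit_closure_semiattractor (F G : IFS X) P :
  (forall g, F g -> lipschitz_with d 1 g) -> subset P (hutchinson d F P) -> (exists p, P p) ->
  (forall g, F g -> G g) -> (forall p, P p -> G (fun _ => p)) ->
  (forall g, G g -> F g \/ exists p, P p /\ g = (fun _ => p)) ->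
  is_semiattractor d G (orbit_closure d F P).
Proof.
  intros HF HP [p Hp] HFG HPG HGF.
  set (A := orbit_closure d F P).
  assert (HA : set_eq (hutchinson d F A) A) by (apply hutchinson_orbit_closure; auto).
  assert (HGA : subset (hutchinson d G A) A).
  { intros x Hx. apply HA, closure_closure. revert x Hx. apply closure_mono.
    intros y [g [Hg [z [Hz ->]]]]. destruct (HGF g Hg) as [HFg | [p' [Hp' ->]]].
    - apply hutchinson_image; assumption.
    - apply HA, subset_orbit_closure, Hp'. }
  assert (Hembed : forall x n,
            subset (hutch_iter d F n P) (hutch_iter d G (S n) (fun z => z = x))).
  { intros x n; induction n as [|n IH]; simpl.
    - intros z Hz. change z with ((fun _ : X => z) x). apply hutchinson_image; auto.
    - apply hutchinson_mono; assumption. }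
  split; [exists p; apply subset_orbit_closure, Hp|].
  intros y; split.
  - intros Hy x. apply Li_of_eventually_near.
    + intros n. exists (Nat.iter n (fun _ => p) x).
      apply iter_mem_hutch_iter; [apply HPG, Hp | reflexivity].
    + intros eps Heps. destruct (Hy eps Heps) as [w [[k Hw] Hyw]].
      exists (S k). intros [|n] Hn; [lia|].
      exists w; split; [|rewrite dist_sym; exact Hyw].
      apply Hembed. apply (hutch_iter_incr F P HP k n); [lia | exact Hw].
  - intros Hy. destruct (Hy p) as [u [Hu Hcvg]].
    assert (HpA : subset (fun z => z = p) A) by (intros z ->; apply subset_orbit_closure, Hp).
    apply closure_closure, (closure_of_seq_cvg A u); [|exact Hcvg].
    intros n. exact (hutch_iter_subset G _ A HGA HpA n (u n) (Hu n)).
Qed.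

End MetricSpace.

Section OneParameterFamily.
Context {X : Type} {d : X -> X -> R} (Hm : is_metric X d)
  {N : nat} {f : nat -> R -> X -> X} {q : nat -> X}.
Hypothesis H1 : forall (i : nat) (x : X) (t : R), (i < N)%nat -> 0 <= t <= 1 ->
  forall eps, 0 < eps -> exists delta, 0 < delta /\
    forall s, 0 <= s <= 1 -> Rabs (s - t) < delta -> d (f i s x) (f i t x) < eps.
Hypothesis H2 : forall (i : nat) (t : R), (i < N)%nat -> 0 <= t < 1 ->
  Rbar_lt (Lip d (f i t)) 1.

Lemma f_near_endpoint i x eps : (i < N)%nat -> 0 < eps -> exists delta, 0 < delta /\
  forall s, 0 <= s < 1 -> 1 - delta < s -> d (f i s x) (f i 1 x) < eps.
Proof.
  intros Hi Heps. destruct (H1 i x 1 Hi ltac:(lra) eps Heps) as [delta [Hdelta Hclose]].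
  exists delta; split; [exact Hdelta|]. intros s Hs Hsd.
  apply Hclose; [lra | rewrite Rabs_left; lra].
Qed.

Lemma endpoint_nonexpansive i : (i < N)%nat -> lipschitz_with d 1 (f i 1).
Proof.
  intros Hi a b. rewrite Rmult_1_l. apply Rle_plus_epsilon. intros eps Heps.
  destruct (f_near_endpoint i a (eps / 2) Hi) as [da [Hda Ha]]; [lra|].
  destruct (f_near_endpoint i b (eps / 2) Hi) as [db [Hdb Hb]]; [lra|].
  destruct (exists_near_one da db Hda Hdb) as [s [Hs [Hsa Hsb]]].
  destruct (Lip_lt_1_contraction Hm (f i s) (H2 i s Hi Hs)) as [c [Hc Hcontr]].
  pose proof (lipschitz_with_le Hm c 1 _ (Rlt_le _ _ (proj2 Hc)) Hcontr a b).
  pose proof (Ha s Hs Hsa). pose proof (Hb s Hs Hsb).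
  pose proof (dist_triangle Hm (f i 1 a) (f i s a) (f i 1 b)).
  pose proof (dist_triangle Hm (f i s a) (f i s b) (f i 1 b)).
  pose proof (dist_sym Hm (f i 1 a) (f i s a)). lra.
Qed.

Lemma F1_nonexpansive g : F1 N f g -> lipschitz_with d 1 g.
Proof. intros [i [Hi ->]]. exact (endpoint_nonexpansive i Hi). Qed.

Hypothesis Hcomp : complete X d.
Hypothesis H3 : forall i, (i < N)%nat -> forall eps, 0 < eps -> exists delta, 0 < delta /\
  forall t, 1 - delta < t < 1 -> forall y, f i t y = y -> d y (q i) < eps.

Lemma endpoint_fixes_limit i : (i < N)%nat -> f i 1 (q i) = q i.
Proof.
  intros Hi. apply (eq_of_dist_lt Hm). intros eps Heps.
  destruct (H3 i Hi (eps / 3)) as [dq [Hdq Hq]]; [lra|].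
  destruct (f_near_endpoint i (q i) (eps / 3) Hi) as [df [Hdf Hf]]; [lra|].
  destruct (exists_near_one dq df Hdq Hdf) as [t [Ht [Htq Htf]]].
  destruct (Lip_lt_1_contraction Hm (f i t) (H2 i t Hi Ht)) as [c [Hc Hcontr]].
  destruct (contraction_has_fixed_point Hm (f i t) c Hc Hcontr Hcomp (q i)) as [y Hy].
  (* d(f_1 q, q) <= d(f_1 q, f_t q) + d(f_t q, f_t y) + d(y, q) <= d(f_1 q, f_t q) + 2 d(y, q) *)
  pose proof (Hq t ltac:(lra) y Hy). pose proof (Hf t Ht Htf).
  pose proof (lipschitz_with_le Hm c 1 _ (Rlt_le _ _ (proj2 Hc)) Hcontr (q i) y) as Hqy.
  rewrite Hy, (dist_sym Hm (q i) y) in Hqy.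
  pose proof (dist_triangle Hm (f i 1 (q i)) (f i t (q i)) (q i)).
  pose proof (dist_triangle Hm (f i t (q i)) y (q i)).
  pose proof (dist_sym Hm (f i 1 (q i)) (f i t (q i))). lra.
Qed.

Lemma Qsub_subset_hutchinson J : (forall i, J i -> (i < N)%nat) ->
  subset (Qsub J q) (hutchinson d (F1 N f) (Qsub J q)).
Proof.
  intros HJN. apply (fixed_points_subset_hutchinson Hm). intros p [i [Hi ->]].
  exists (f i 1); split; [exists i; auto | apply endpoint_fixes_limit; auto].
Qed.

Lemma Qset_subset_orbit_closure_Qsub J :
  (forall i, J i -> (i < N)%nat) -> (exists i, J i) ->
  (forall i, (i < N)%nat -> Lip d (f i 1) = Finite 1 -> J i) ->
  subset (Qset N q) (orbit_closure d (F1 N f) (Qsub J q)).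
Proof.
  intros HJN [j Hj] HJlip x [i [Hi ->]].
  destruct (classic (J i)) as [HJi | HJi].
  - apply (subset_orbit_closure Hm); exists i; auto.
  - assert (Hlt : Rbar_lt (Lip d (f i 1)) 1).
    { apply (Lip_lt_1_of_nonexpansive Hm); [apply endpoint_nonexpansive, Hi|].
      intros Hone. exact (HJi (HJlip i Hi Hone)). }
    destruct (Lip_lt_1_contraction Hm (f i 1) Hlt) as [c [Hc Hcontr]].
    apply (fixed_point_mem_orbit_closure Hm _ _ (f i 1) c (q i) (q j)).
    + exists i; auto.
    + exact Hc.
    + exact Hcontr.
    + apply endpoint_fixes_limit, Hi.
    + exists j; auto.
Qed.

End OneParameterFamily.

Theorem mainTheorem3 (X : Type) (d : X -> X -> R)
  (Hmetric : is_metric X d) (Hcomplete : complete X d)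
  (N : nat) (HN : (2 <= N)%nat)
  (f : nat -> R -> X -> X)
  (Hcont : forall i t, (i < N)%nat -> 0 <= t <= 1 -> continuous_map X d (f i t))
  (H1 : forall (i : nat) (x : X) (t : R), (i < N)%nat -> 0 <= t <= 1 ->
     forall eps, 0 < eps -> exists delta, 0 < delta /\
       forall s, 0 <= s <= 1 -> Rabs (s - t) < delta -> d (f i s x) (f i t x) < eps)
  (* (H2) : Lip(F_t,d) = max_i Lip(f_(i,t),d) < 1 for t in [0,1) *)
  (H2 : forall (i : nat) (t : R), (i < N)%nat -> 0 <= t < 1 ->
     Rbar_lt (Lip d (f i t)) 1)
  (* (H3) : q i = lim_{t -> 1^-} q_{i,t}, q_{i,t} the unique fixed point of f_(i,t) *)
  (q : nat -> X)
  (H3 : forall i, (i < N)%nat -> forall eps, 0 < eps -> exists delta, 0 < delta /\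
     forall t, 1 - delta < t < 1 -> forall y, f i t y = y -> d y (q i) < eps) :
  exists A : X -> Prop,
    is_lower_transition_attractor d N f q A /\
    (* (i) *)
    set_eq A (fun x => forall B : X -> Prop,
                 set_eq (hutchinson d (F1 N f) B) B -> subset (Qset N q) B -> B x) /\
    (* (ii) *)
    set_eq A (orbit_closure d (F1 N f) (Qset N q)) /\
    (* (iii), (iv) *)
    (forall J : nat -> Prop,
       (forall i, J i -> (i < N)%nat) -> (exists i, J i) ->
       (forall i, (i < N)%nat -> Lip d (f i 1) = Finite 1 -> J i) ->
       set_eq A (orbit_closure d (F1 N f) (Qsub J q)) /\
       is_semiattractor d (F1flat N f J q) A).
Proof.
  pose proof (F1_nonexpansive Hmetric H1 H2) as HF.
  pose proof (Qsub_subset_hutchinson Hmetric H1 H2 Hcomplete H3) as Hseed.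
  set (A := orbit_closure d (F1 N f) (Qset N q)).
  assert (HA : set_eq (hutchinson d (F1 N f) A) A)
    by (apply (hutchinson_orbit_closure Hmetric); [exact HF | apply Hseed; auto]).
  assert (HQA : subset (Qset N q) A) by apply (subset_orbit_closure Hmetric).
  assert (Hleast : forall B, set_eq (hutchinson d (F1 N f) B) B -> subset (Qset N q) B ->
                             subset A B) by (intros B; apply (orbit_closure_least Hmetric)).
  exists A; split; [|split; [|split]].
  - split; [exact HA | split; [exact HQA | exact Hleast]].
  - intros x; split; [intros Hx B HB HQB; exact (Hleast B HB HQB x Hx) | intros Hx; exact (Hx A HA HQA)].
  - intros x; reflexivity.
  - intros J HJN HJne HJlip.
    assert (HAJ : set_eq (orbit_closure d (F1 N f) (Qsub J q)) A).
    { intros x; split; intros Hx.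
      - revert x Hx. apply (orbit_closure_least Hmetric _ _ _ HA).
        intros x [i [Hi ->]]. apply HQA. exists i; auto.
      - apply (Hleast _ (hutchinson_orbit_closure Hmetric _ _ HF (Hseed J HJN))); [|exact Hx].
        apply (Qset_subset_orbit_closure_Qsub Hmetric H1 H2 Hcomplete H3); assumption. }
    split; [intros x; symmetry; apply HAJ|].
    apply (is_semiattractor_set_eq _ _ _ HAJ).
    apply (orbit_closure_semiattractor Hmetric).
    + exact HF.
    + exact (Hseed J HJN).
    + destruct HJne as [j Hj]. exists (q j), j; auto.
    + intros g Hg; left; exact Hg.
    + intros p [i [Hi ->]]; right; exists i; auto.
    + intros g [Hg | [i [Hi ->]]]; [left; exact Hg | right; exists (q i); split; [exists i|]; auto].
Qed.
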